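(* Let $\Lambda:\{-1,1\}^k\to\{0,1\}$ be a predicate, $c\in\mathbb R$, let $\mathcal I^*$ be an instance of $\mathrm{CSP}(\Lambda)$ on $n$ variables with $\mathrm{opt}(\mathcal I^* )=s$, let $f(x)=c-\mathcal I^*(x)$, and let $g:[q]\times[q]\to\{-1,1\}$. Then $M^g_f$ is a submatrix of $\mathcal M_{q\cdot n,s}$ in the following sense: there exist maps $y\mapsto\mathcal I_y$ from $[q]^n$ to $\Lambda^s_{qn}$ and $x\mapsto\tilde x$ from $[q]^n$ to $\{-1,1\}^{qn}$ such that $\mathcal M_{q\cdot n,s}(\mathcal I_y,\tilde x)=M^g_f(x,y)$ for all $x,y\in[q]^n$.
   Context: An instance $\mathcal I$ of $\mathrm{CSP}(\Lambda)$ on $N$ variables is a list of constraints, each a $k$-tuple of literals over the variables; $\mathcal I(x)$ is the fraction of constraints satisfied by $x\in\{-1,1\}^N$ and $\mathrm{opt}(\mathcal I)=\max_x\mathcal I(x)$. $\Lambda^s_N$ denotes the family of all instances of $\mathrm{CSP}(\Lambda)$ on $N$ variables with $\mathrm{opt}(\mathcal I)\le s$, and $\mathcal M_{N,s}:\Lambda^s_N\times\{-1,1\}^N\to\mathbb R$ is the matrix $\mathcal M_{N,s}(\mathcal I,x)=c-\mathcal I(x)$. For $f:\{-1,1\}^n\to\mathbb R$, $M^g_f$ is the $[q]^n\times[q]^n$ matrix with $M^g_f(x,y)=f(g(x_1,y_1),\dots,g(x_n,y_n))$. *)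

From mathcomp Require Import all_boot all_order all_algebra.
Set Implicit Arguments. Unset Strict Implicit. Unset Printing Implicit Defensive.
Import Order.TTheory GRing.Theory Num.Theory.
Local Open Scope ring_scope.

(* Signs {-1,1} are encoded by bool: true <-> -1, false <-> 1
   (so the product of signs is xor). *)
Definition sign := bool.

Definition assignment (N : nat) := {ffun 'I_N -> sign}.

Definition literal (N : nat) := ('I_N * bool)%type.
Definition lit_val N (l : literal N) (x : assignment N) : sign := x l.1 (+) l.2.

Definition constraint (k N : nat) := {ffun 'I_k -> literal N}.
Definition instance (k N : nat) := seq (constraint k N).

Definition predicate (k : nat) := {ffun 'I_k -> sign} -> bool.

Definition satisfies k N (Lam : predicate k) (C : constraint k N) (x : assignment N) : bool :=
  Lam [ffun i => lit_val (C i) x].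

(* I(x) : fraction of constraints satisfied (0 for the empty instance). *)
Definition inst_val (R : realFieldType) k N (Lam : predicate k) (I : instance k N)
    (x : assignment N) : R :=
  (count (fun C => satisfies Lam C x) I)%:R / (size I)%:R.

(* opt(I) = max_x I(x)  (all values are >= 0, so starting the max at 0 is harmless). *)
Definition opt (R : realFieldType) k N (Lam : predicate k) (I : instance k N) : R :=
  \big[Num.max/0]_(x : assignment N) inst_val R Lam I x.

Definition in_family (R : realFieldType) k N (Lam : predicate k) (s : R) (I : instance k N) : Prop :=
  opt R Lam I <= s.

Definition MNs (R : realFieldType) k N (Lam : predicate k) (c : R) (I : instance k N)
    (x : assignment N) : R := c - inst_val R Lam I x.

Definition Mgf (R : realFieldType) (n q : nat) (f : assignment n -> R)
    (g : 'I_q -> 'I_q -> sign) (x y : {ffun 'I_n -> 'I_q}) : R :=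
  f [ffun i => g (x i) (y i)].

(* Fix y in [q]^n and place the q*n variables in a q x n grid.  Renaming each
   variable i of I^* to the grid cell (y_i, i) turns I^* into an instance I_y
   on q*n variables; an assignment w of the grid satisfies a renamed
   constraint iff the assignment i |-> w(y_i, i) satisfies the original one,
   so I_y(w) = I^*(i |-> w(y_i, i)) and hence opt(I_y) <= opt(I^* ) = s.
   Filling cell (a, i) of the grid with g(x_i, a) gives an assignment whose
   value under I_y is I^*(g(x_1, y_1), ..., g(x_n, y_n)). *)

From mathcomp Require Import all_boot all_order all_algebra.
Set Implicit Arguments. Unset Strict Implicit. Unset Printing Implicit Defensive.
Import Order.TTheory GRing.Theory Num.Theory.
Local Open Scope ring_scope.

Section Renaming.
Variables (k n N : nat) (Lam : predicate k) (rho : 'I_n -> 'I_N).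

Definition rename_constraint (C : constraint k n) : constraint k N :=
  [ffun j => (rho (C j).1, (C j).2)].

Definition rename_instance (I : instance k n) : instance k N :=
  map rename_constraint I.

Definition pullback (w : assignment N) : assignment n := [ffun i => w (rho i)].

Lemma satisfies_rename C w :
  satisfies Lam (rename_constraint C) w = satisfies Lam C (pullback w).
Proof. by congr Lam; apply/ffunP => j; rewrite !ffunE /lit_val ffunE. Qed.

Lemma inst_val_rename (R : realFieldType) I w :
  inst_val R Lam (rename_instance I) w = inst_val R Lam I (pullback w).
Proof.
rewrite /inst_val size_map count_map; congr (_%:R / _).
by apply: eq_count => C; rewrite /= satisfies_rename.
Qed.

Lemma opt_rename_le (R : realFieldType) I :
  opt R Lam (rename_instance I) <= opt R Lam I.
Proof.
apply: bigmax_le => [|w _]; first exact: bigmax_ge_id.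
by rewrite inst_val_rename; apply: le_bigmax.
Qed.

End Renaming.

Section Grid.
Variables (n q : nat).

Definition grid_var (y : {ffun 'I_n -> 'I_q}) (i : 'I_n) : 'I_(q * n) :=
  mxvec_index (y i) i.

Definition grid_assignment (g : 'I_q -> 'I_q -> sign) (x : {ffun 'I_n -> 'I_q})
  : assignment (q * n) :=
  [ffun v => mxvec (\matrix_(a < q, i < n) g (x i) a) 0 v].

Lemma pullback_grid_assignment g x y :
  pullback (grid_var y) (grid_assignment g x) = [ffun i => g (x i) (y i)].
Proof. by apply/ffunP => i; rewrite !ffunE mxvecE mxE. Qed.

End Grid.

Theorem lemma7p3 (R : realFieldType) (k : nat) (Lam : predicate k) (c : R)
    (n : nat) (Istar : instance k n) (s : R) (q : nat)
    (g : 'I_q -> 'I_q -> sign) :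
  @opt R k n Lam Istar = s ->
  let f := fun x : assignment n => c - @inst_val R k n Lam Istar x in
  exists (Iy : {ffun 'I_n -> 'I_q} -> instance k (q * n))
         (xt : {ffun 'I_n -> 'I_q} -> assignment (q * n)),
    (forall y, in_family Lam s (Iy y)) /\
    (forall x y, MNs Lam c (Iy y) (xt x) = Mgf f g x y).
Proof.
move=> opt_s f.
exists (fun y => rename_instance (grid_var y) Istar), (grid_assignment g).
split=> [y | x y]; first by rewrite /in_family -opt_s opt_rename_le.
by rewrite /MNs /Mgf /f inst_val_rename pullback_grid_assignment.
Qed.
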